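(* Let $\varphi$ be a finite conjunction of literals of the two forms $x\in y$ and $x = y\setminus z$ (with $x,y,z$ set variables), with finite set of variables $\mathrm{Vars}(\varphi)$. Let $M$ be a set assignment over $\mathrm{Vars}(\varphi)$ satisfying $\varphi$; let $\bar x,\bar y\in\mathrm{Vars}(\varphi)$, let $\overline{M}$ be a set assignment over $\mathrm{Vars}(\varphi)$ satisfying $\varphi$ with $\overline{M}\bar x\neq \overline{M}\bar y$, and let $\mathfrak{t}$ be a set belonging to exactly one of $\overline{M}\bar x$, $\overline{M}\bar y$. Fix a set $\mathfrak{s}$ with $\mathrm{rk}(\mathfrak{s})>\mathrm{rk}(M)$. Define $\mathsf{V}_0=\{u\in\mathrm{Vars}(\varphi)\mid \mathfrak{t}\in\overline{M}u\}$; $\mathsf{V}_n=\{u\in\mathrm{Vars}(\varphi)\mid Mu\cap\{Mw\mid w\in\mathsf{V}_{n-1}\}\neq\emptyset\}$ for $n\ge1$; $M_0v=Mv\cup\{\mathfrak{s}\}$ if $v\in\mathsf{V}_0$ and $M_0v=Mv$ otherwise; for $n\ge1$, $M_nv=M_{n-1}v\cup\{M_{n-1}u\mid u\in\mathsf{V}_{n-1},\ Mu\in Mv\}$ if $v\in\mathsf{V}_n$ and $M_nv=M_{n-1}v$ otherwise. Then for all $h,k>\min(|\mathrm{Vars}(\varphi)|-1,\ \mathrm{rk}(M))$ we have $M_h=M_k$.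
   Context: A set assignment is a map from a finite set of set variables into the von Neumann universe $\mathcal{V}=\bigcup_\alpha\mathcal{V}_\alpha$, $\mathcal{V}_\alpha=\bigcup_{\beta<\alpha}\mathcal{P}(\mathcal{V}_\beta)$; it satisfies $x\in y$ iff $Mx\in My$ and $x=y\setminus z$ iff $Mx=My\setminus Mz$. The rank $\mathrm{rk}(s)$ of a set $s$ is the least ordinal $\alpha$ with $s\subseteq\mathcal{V}_\alpha$, and $\mathrm{rk}(M)=\max\{\mathrm{rk}(Mx)\mid x\in\mathrm{dom}(M)\}$. *)

(* + mathcomp fintype for the finite set of variables.
   Sets of the von Neumann universe are modelled by Aczel's well-founded
   trees (sets-as-types), with extensional equality [Veq]. *)
From Stdlib Require Import List ClassicalEpsilon.
From mathcomp Require Import all_boot.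

Set Implicit Arguments.
Unset Strict Implicit.
Unset Printing Implicit Defensive.

Inductive V : Type := sup : forall (A : Type), (A -> V) -> V.

Definition idx (x : V) : Type := match x with sup A _ => A end.
Definition elt (x : V) : idx x -> V := match x with sup _ f => f end.
Arguments elt : clear implicits.

Fixpoint Veq (x y : V) {struct x} : Prop :=
  match x with
  | sup A f => match y with
    | sup B g => (forall a : A, exists b : B, Veq (f a) (g b)) /\
                 (forall b : B, exists a : A, Veq (f a) (g b))
    end
  end.

Definition Vin (x y : V) : Prop := exists b : idx y, Veq x (elt y b).

Definition Vdiff (y z : V) : V :=
  @sup {b : idx y | ~ Vin (elt y b) z} (fun p => elt y (proj1_sig p)).
Definition Vunion (x y : V) : V :=
  @sup (idx x + idx y)%type
       (fun c => match c with inl a => elt x a | inr b => elt y b end).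
Definition Vsing (s : V) : V := @sup unit (fun _ => s).
Definition Vif (P : Prop) (a b : V) : V :=
  if excluded_middle_informative P then a else b.

(** rank_le x y  <->  rk(x) <= rk(y) *)
Fixpoint rank_le (x y : V) {struct x} : Prop :=
  match x with
  | sup A f => forall a : A, exists b : idx y, rank_le (f a) (elt y b)
  end.
(** rank_lt x y  <->  rk(x) < rk(y) *)
Definition rank_lt (x y : V) : Prop := exists b : idx y, rank_le x (elt y b).
(** rank_le_nat x n  <->  rk(x) <= n  (i.e. x is a subset of V_n) *)
Fixpoint rank_le_nat (x : V) (n : nat) : Prop :=
  match n with
  | 0 => forall a : idx x, False
  | S m => forall a : idx x, rank_le_nat (elt x a) m
  end.

Inductive lit (T : Type) : Type :=
| LIn : T -> T -> lit T
| LDiff : T -> T -> T -> lit T.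

Definition lit_vars (T : Type) (l : lit T) : list T :=
  match l with LIn x y => x :: y :: nil | LDiff x y z => x :: y :: z :: nil end.

Definition occurs (T : Type) (v : T) (phi : list (lit T)) : Prop :=
  exists l, List.In l phi /\ List.In v (lit_vars l).

Definition sat_lit (T : Type) (M : T -> V) (l : lit T) : Prop :=
  match l with
  | LIn x y => Vin (M x) (M y)
  | LDiff x y z => Veq (M x) (Vdiff (M y) (M z))
  end.

Definition sat (T : Type) (M : T -> V) (phi : list (lit T)) : Prop :=
  forall l, List.In l phi -> sat_lit M l.

(** rk(M) < n, for n a natural number *)
Definition rkM_lt_nat (T : Type) (M : T -> V) (n : nat) : Prop :=
  exists m, n = S m /\ forall x, rank_le_nat (M x) m.

Section Construction.
Variables (T : finType) (M Mbar : T -> V) (t s : V).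

Fixpoint Vs (n : nat) (u : T) : Prop :=
  match n with
  | 0 => Vin t (Mbar u)
  | S m => exists w, Vs m w /\ Vin (M w) (M u)
  end.

Fixpoint Ms (n : nat) (v : T) : V :=
  match n with
  | 0 => Vif (Vs 0 v) (Vunion (M v) (Vsing s)) (M v)
  | S m => Vif (Vs (S m) v)
      (Vunion (Ms m v)
         (@sup {u : T | Vs m u /\ Vin (M u) (M v)} (fun p => Ms m (proj1_sig p))))
      (Ms m v)
  end.
End Construction.

(** If [u] lies in [V_n], there are variables [u_0, ..., u_n = u] with
    [M u_0 \in M u_1 \in ... \in M u_n].  Since membership is well founded,
    the [u_i] are pairwise distinct, so [n < |Vars(phi)|]; since ranks grow
    strictly along the chain, [n < rk(M)].  Hence [V_n] is empty beyond the
    bound, where [M_n = M_(n-1)]. *)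
From Stdlib Require Import List Relations Wellfounded ClassicalEpsilon.
From mathcomp Require Import all_boot zify.

Set Implicit Arguments.
Unset Strict Implicit.
Unset Printing Implicit Defensive.

Lemma Veq_refl x : Veq x x.
Proof. by elim: x => A f IH /=; split=> a; exists a. Qed.

Lemma Veq_trans x y z : Veq x y -> Veq y z -> Veq x z.
Proof.
elim: x y z => A f IH [B g] [C k] /= [fg gf] [gk kg]; split.
- move=> a; have [b fgb] := fg a; have [c gkc] := gk b.
  exists c; exact: IH fgb gkc.
- move=> c; have [b gkb] := kg c; have [a fga] := gf b.
  exists a; exact: IH fga gkb.
Qed.

Lemma Acc_Vin_Veq y x : Veq x y -> Acc Vin x.
Proof.
elim: y x => B g IH [A f] /= [fg _]; constructor=> z [a za].
have [b fgb] := fg a; exact: IH b _ (Veq_trans za fgb).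
Qed.

Lemma Vin_wf : well_founded Vin.
Proof. move=> x; exact: Acc_Vin_Veq (Veq_refl x). Qed.

Lemma rank_le_nat_Veq m x y : Veq x y -> rank_le_nat y m -> rank_le_nat x m.
Proof.
elim: m x y => [|m IH] [A f] [B g] /= [fg _] gm a; have [b fgb] := fg a.
- exact: gm b.
- exact: IH fgb (gm b).
Qed.

Lemma rank_le_nat_Vin x y m :
  Vin x y -> rank_le_nat y m -> exists2 m', m = m'.+1 & rank_le_nat x m'.
Proof.
case: y => B g [b xb] /= ym; case: m ym => [|m] /= ym; first by case: (ym b).
by exists m; last exact: rank_le_nat_Veq xb (ym b).
Qed.

Lemma wf_irrefl (T : Type) (R : T -> T -> Prop) x : well_founded R -> ~ R x x.
Proof. move=> wfR; elim: (wfR x) => y _ IH Ryy; exact: (IH _ Ryy Ryy). Qed.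

Section Chains.
Variables (T : Type) (R : T -> T -> Prop).

Definition chain (c : nat -> T) (n : nat) := forall i, i < n -> R (c i.+1) (c i).

Lemma chain_clos_trans c n i j :
  chain c n -> i < j <= n -> clos_trans T R (c j) (c i).
Proof.
move=> cR; elim: j => [//|j IH] /andP[ij jn].
have step := t_step _ _ _ _ (cR j jn).
rewrite ltnS leq_eqVlt in ij; case/predU1P: ij => [-> //|ij].
by apply: t_trans step (IH _); rewrite ij ltnW.
Qed.

End Chains.

Lemma wf_chain_lt_card (T : finType) (R : T -> T -> Prop) (c : nat -> T) n :
  well_founded R -> chain R c n -> n < #|T|.
Proof.
move=> wfR cR.
have acyclic i j : i < j <= n -> c i <> c j.
  move=> ijn cij; have := chain_clos_trans cR ijn; rewrite cij.
  exact: wf_irrefl (wf_clos_trans _ _ wfR).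
have /leq_card : injective (fun i : 'I_n.+1 => c i).
  move=> i j /= cij; apply: val_inj.
  case: (ltngtP i j) => // [ij | ji]; exfalso.
  - by apply: (acyclic i j _ cij); rewrite ij -ltnS ltn_ord.
  - by apply: (acyclic j i _ (esym cij)); rewrite ji -ltnS ltn_ord.
by rewrite card_ord.
Qed.

Section Stabilization.
Variables (T : finType) (M Mbar : T -> V) (t s : V).

Let Min u w := Vin (M u) (M w).

Lemma Vs_chain n u : Vs M Mbar t n u -> exists2 c, c 0 = u & chain Min c n.
Proof.
elim: n u => [|n IH] u /=; first by exists (fun=> u).
case=> w [/IH [c cw cR] wu]; exists (fun i => if i is j.+1 then c j else u) => //.
by case=> [|i] /=; [rewrite cw | apply: cR].
Qed.

Lemma Vs_lt_card n u : Vs M Mbar t n u -> n < #|T|.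
Proof.
case/Vs_chain=> c _; apply: wf_chain_lt_card.
exact: wf_inverse_image Vin_wf.
Qed.

Lemma Vs_le_rank n u m : Vs M Mbar t n u -> rank_le_nat (M u) m -> n <= m.
Proof.
elim: n u m => [//|n IH] u m /= [w [Vsw wu]] /(rank_le_nat_Vin wu) [m' -> wm'].
exact: IH Vsw wm'.
Qed.

Lemma Vs_vanish h : (#|T| - 1 < h) \/ rkM_lt_nat M h ->
  forall n u, h <= n -> ~ Vs M Mbar t n u.
Proof.
move=> bound n u hn Vsu; case: bound => [|[m [hm rkM]]].
- by have := Vs_lt_card Vsu; lia.
- by have := Vs_le_rank Vsu (rkM u); lia.
Qed.

Lemma Ms_succ n v : ~ Vs M Mbar t n.+1 v -> Ms M Mbar t s n.+1 v = Ms M Mbar t s n v.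
Proof. by move=> nVs /=; rewrite /Vif; case: excluded_middle_informative. Qed.

Lemma Ms_const h : (forall n u, h <= n -> ~ Vs M Mbar t n u) ->
  forall n v, h <= n -> Ms M Mbar t s n v = Ms M Mbar t s h v.
Proof.
move=> vanish n v /subnKC <-; elim: (n - h) => [|j IH]; first by rewrite addn0.
rewrite addnS Ms_succ ?IH //.
by apply: vanish; rewrite -addnS leq_addr.
Qed.

End Stabilization.

Theorem corollary4 (T : finType) (phi : list (lit T)) (M Mbar : T -> V)
    (xb yb : T) (t s : V) :
  (forall v : T, occurs v phi) ->
  sat M phi ->
  sat Mbar phi ->
  ~ Veq (Mbar xb) (Mbar yb) ->
  ((Vin t (Mbar xb) /\ ~ Vin t (Mbar yb)) \/
   (Vin t (Mbar yb) /\ ~ Vin t (Mbar xb))) ->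
  (forall x : T, rank_lt (M x) s) ->
  forall h k : nat,
    ((#|T| - 1 < h)%N \/ rkM_lt_nat M h) ->
    ((#|T| - 1 < k)%N \/ rkM_lt_nat M k) ->
    forall v : T, Veq (Ms M Mbar t s h v) (Ms M Mbar t s k v).
Proof.
move=> _ _ _ _ _ _ h k bound_h bound_k v.
case: (leqP h k) => [hk | /ltnW kh].
- by rewrite (Ms_const _ (Vs_vanish bound_h) v hk); apply: Veq_refl.
- by rewrite (Ms_const _ (Vs_vanish bound_k) v kh); apply: Veq_refl.
Qed.
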